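(* Let $P\in\mathcal H$ be a right group-like projection such that $\mathcal V_P$ is a Frobenius algebra, and let $y\in{}_P\mathcal V$ be a cyclic element for the right $\mathcal V_P$-module ${}_P\mathcal V$ (so that $a\mapsto S(a)y$ is a linear bijection $\mathcal V_P\to{}_P\mathcal V$). Define $\iota_y:{}_P\mathcal V\to\mathcal V_P$ by $\iota_y(S(a)y)=a$ for $a\in\mathcal V_P$, and put $z_y=P_{(2)}\,\iota_y(P_{(1)})\in\mathcal V_P$. If $z_y$ is invertible in $\mathcal V_P$, then every right $\mathcal V_P$-module is completely reducible; in particular $\mathcal V_P$ is semisimple.
   Context: $k$ is a field; $\mathcal H$ is a Hopf algebra over $k$ with comultiplication $\Delta$ (Sweedler notation $\Delta(x)=x_{(1)}\otimes x_{(2)}$), counit $\varepsilon$, invertible antipode $S$, dual $\mathcal H'$. For $P\in\mathcal H$, $\mathcal V_P=\{(\nu\otimes\mathrm{id})\Delta(P):\nu\in\mathcal H'\}$ and ${}_P\mathcal V=\{(\mathrm{id}\otimes\nu)\Delta(P):\nu\in\mathcal H'\}$. A non-zero idempotent $P$ is a right group-like projection if $\Delta(P)(1\otimes P)=(1\otimes P)\Delta(P)=P\otimes P$; then $\mathcal V_P$ is a subalgebra, $(1\otimes a)\Delta(P)=(S(a)\otimes1)\Delta(P)$ for $a\in\mathcal V_P$, and ${}_P\mathcal V$ is a right $\mathcal V_P$-module via $x\cdot a=S(a)x$. A finite-dimensional unital algebra is Frobenius if it admits a non-degenerate bilinear form $\sigma$ with $\sigma(ab,c)=\sigma(a,bc)$.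 An element $y$ of a right module $M$ is cyclic if $y\cdot\mathcal V_P=M$. *)

From HB Require Import structures.
From mathcomp Require Import all_boot all_order all_algebra.
Set Implicit Arguments. Unset Strict Implicit. Unset Printing Implicit Defensive.
Import GRing.Theory.
Local Open Scope ring_scope.

(* Algebraic tensor products H (x) H and H (x) H (x) H are represented by     *)
(* finite lists of simple tensors (Sweedler-style representatives).  Two     *)
(* representatives denote the same tensor iff every bilinear (resp.          *)
(* trilinear) map into any k-vector space takes the same value on them       *)
(* (universal property of the tensor product).                               *)
Section Tensor.
Variables (k : fieldType) (H : lmodType k).

Definition bilin (W : lmodType k) (beta : H -> H -> W) : Prop :=
  (forall b (c : k) x y, beta (c *: x + y) b = c *: beta x b + beta y b) /\
  (forall a (c : k) x y, beta a (c *: x + y) = c *: beta a x + beta a y).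

Definition trilin (W : lmodType k) (beta : H -> H -> H -> W) : Prop :=
  (forall b d (c : k) x y, beta (c *: x + y) b d = c *: beta x b d + beta y b d) /\
  (forall a d (c : k) x y, beta a (c *: x + y) d = c *: beta a x d + beta a y d) /\
  (forall a b (c : k) x y, beta a b (c *: x + y) = c *: beta a b x + beta a b y).

Definition teq2 (s t : seq (H * H)) : Prop :=
  forall (W : lmodType k) (beta : H -> H -> W), bilin beta ->
    \sum_(p <- s) beta p.1 p.2 = \sum_(p <- t) beta p.1 p.2.

Definition teq3 (s t : seq (H * H * H)) : Prop :=
  forall (W : lmodType k) (beta : H -> H -> H -> W), trilin beta ->
    \sum_(p <- s) beta p.1.1 p.1.2 p.2 = \sum_(p <- t) beta p.1.1 p.1.2 p.2.

Definition lin_functional (nu : H -> k) : Prop :=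
  forall (c : k) x y, nu (c *: x + y) = c * nu x + nu y.

Definition klinear (f : H -> H) : Prop :=
  forall (c : k) x y, f (c *: x + y) = c *: f x + f y.

End Tensor.

(* hDelta x is a representative  [:: (x_(1), x_(2)); ...]  of Delta(x).      *)
Record hopf (k : fieldType) (H : algType k) := Hopf {
  hDelta : H -> seq (H * H);
  heps : H -> k;
  hS : H -> H;
  hDelta_lin : forall (c : k) x y,
    teq2 (hDelta (c *: x + y))
         ([seq (c *: p.1, p.2) | p <- hDelta x] ++ hDelta y);
  hDelta_mul : forall x y,
    teq2 (hDelta (x * y))
         [seq (p.1 * q.1, p.2 * q.2) | p <- hDelta x, q <- hDelta y];
  hDelta_1 : teq2 (hDelta 1) [:: (1, 1)];
  hDelta_coassoc : forall x,
    teq3 [seq (q.1, q.2, p.2) | p <- hDelta x, q <- hDelta p.1]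
         [seq (p.1, q.1, q.2) | p <- hDelta x, q <- hDelta p.2];
  heps_lin : lin_functional heps;
  heps_mul : forall x y, heps (x * y) = heps x * heps y;
  heps_1 : heps 1 = 1;
  heps_counitl : forall x, \sum_(p <- hDelta x) heps p.1 *: p.2 = x;
  heps_counitr : forall x, \sum_(p <- hDelta x) heps p.2 *: p.1 = x;
  hS_lin : klinear hS;
  hS_antipodel : forall x, \sum_(p <- hDelta x) hS p.1 * p.2 = heps x *: 1;
  hS_antipoder : forall x, \sum_(p <- hDelta x) p.1 * hS p.2 = heps x *: 1;
  hS_bij : bijective hS
}.

Section GroupLike.
Variables (k : fieldType) (H : algType k) (h : hopf H).

Definition inVP (P x : H) : Prop :=
  exists nu : H -> k, lin_functional nu /\
    x = \sum_(p <- hDelta h P) nu p.1 *: p.2.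

Definition inPV (P x : H) : Prop :=
  exists nu : H -> k, lin_functional nu /\
    x = \sum_(p <- hDelta h P) nu p.2 *: p.1.

Definition right_group_like_projection (P : H) : Prop :=
  [/\ P != 0, P * P = P,
      teq2 [seq (p.1, p.2 * P) | p <- hDelta h P] [:: (P, P)] &
      teq2 [seq (p.1, P * p.2) | p <- hDelta h P] [:: (P, P)]].

Definition VP_Frobenius (P : H) : Prop :=
  exists sigma : H -> H -> k,
    [/\ (forall b c x y, inVP P b -> inVP P x -> inVP P y ->
           sigma (c *: x + y) b = c * sigma x b + sigma y b),
        (forall a c x y, inVP P a -> inVP P x -> inVP P y ->
           sigma a (c *: x + y) = c * sigma a x + sigma a y),
        (forall a b c, inVP P a -> inVP P b -> inVP P c ->
           sigma (a * b) c = sigma a (b * c)),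
        (forall a, inVP P a -> (forall b, inVP P b -> sigma a b = 0) -> a = 0) &
        (forall b, inVP P b -> (forall a, inVP P a -> sigma a b = 0) -> b = 0)].

(* y is cyclic for the right V_P-module _P V (action x . a = S(a) x) *)
Definition cyclic_PV (P y : H) : Prop :=
  inPV P y /\ forall x, inPV P x -> exists2 a, inVP P a & x = hS h a * y.

(* right V_P-modules: an additive group M with an action of the elements
   of V_P (elements of H outside V_P act arbitrarily / irrelevantly) *)
Definition right_VP_module (P : H) (M : zmodType) (act : M -> H -> M) : Prop :=
  [/\ (forall m, act m 1 = m),
      (forall m n a, inVP P a -> act (m + n) a = act m a + act n a),
      (forall m a b, inVP P a -> inVP P b -> act m (a + b) = act m a + act m b) &
      (forall m a b, inVP P a -> inVP P b -> act m (a * b) = act (act m a) b)].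

Definition submodule (P : H) (M : zmodType) (act : M -> H -> M)
    (N : M -> Prop) : Prop :=
  [/\ N 0, (forall m n, N m -> N n -> N (m + n)) &
      (forall m a, N m -> inVP P a -> N (act m a))].

Definition completely_reducible (P : H) (M : zmodType) (act : M -> H -> M) : Prop :=
  forall N, submodule P act N ->
    exists N', [/\ submodule P act N',
      (forall m, exists n, exists n', [/\ N n, N' n' & m = n + n']) &
      (forall m, N m -> N' m -> m = 0)].

End GroupLike.

From HB Require Import structures.
From mathcomp Require Import all_boot all_order all_algebra ring.
From mathcomp Require Import boolp classical_sets.
Set Implicit Arguments. Unset Strict Implicit. Unset Printing Implicit Defensive.
Import GRing.Theory.
Local Open Scope ring_scope.

(* Let w be the inverse of z_y. The tensor e = w P_(2) (x) iota_y(P_(1)) is a separability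
   element of V_P: e_1 e_2 = w z_y = 1, and x e = e x for x in V_P. The latter comes from
   (1 (x) x) Delta(P) = (S(x) (x) 1) Delta(P), a consequence of Delta(P)(1 (x) P) = P (x) P,
   together with iota_y(S(x) u) = iota_y(u) x; it also makes z_y, hence w, central.
   Maschke's averaging m |-> e_2 . pi(m . e_1) then turns any k-linear projection pi onto a
   submodule into a V_P-linear one, whose kernel is a complement. *)

Section LinearMaps.
Variables (k : fieldType) (U W : lmodType k) (f : U -> W) (f_lin : linear f).

HB.instance Definition _ := GRing.isLinear.Build k U W *:%R f f_lin.

Lemma lin0 : f 0 = 0. Proof. exact: linear0. Qed.
Lemma linD x y : f (x + y) = f x + f y. Proof. exact: linearD. Qed.
Lemma linZ c x : f (c *: x) = c *: f x. Proof. exact: linearZ. Qed.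
Lemma linB x y : f (x - y) = f x - f y. Proof. exact: linearB. Qed.
Lemma lin_sum I (r : seq I) (F : I -> U) :
  f (\sum_(i <- r) F i) = \sum_(i <- r) f (F i).
Proof. exact: linear_sum. Qed.
Lemma lin_sumZ I (r : seq I) (c : I -> k) (v : I -> U) :
  f (\sum_(i <- r) c i *: v i) = \sum_(i <- r) c i *: f (v i).
Proof. by rewrite linear_sum; under eq_bigr do rewrite linearZ. Qed.

End LinearMaps.

Section LinearClosure.
Variable k : fieldType.
Implicit Types U V W : lmodType k.

Lemma linear_id U : linear (fun x : U => x).
Proof. by []. Qed.

Lemma linear_comp U V W (f : V -> W) (g : U -> V) :
  linear f -> linear g -> linear (fun x => f (g x)).
Proof. by move=> f_lin g_lin c x y; rewrite g_lin f_lin. Qed.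

Lemma linear_sumf U W I (r : seq I) (F : I -> U -> W) :
  (forall i, linear (F i)) -> linear (fun x => \sum_(i <- r) F i x).
Proof.
move=> F_lin c x y; rewrite scaler_sumr -big_split /=.
by apply: eq_bigr => i _; rewrite F_lin.
Qed.

Lemma linear_scale U W (f : U -> W) (a : k) :
  linear f -> linear (fun x => a *: f x).
Proof. by move=> f_lin c x y; rewrite f_lin scalerDr !scalerA mulrC. Qed.

Lemma linear_functional_scale U W (nu : U -> k) (g : U -> U) (w : W) :
  lin_functional nu -> linear g -> linear (fun x => nu (g x) *: w).
Proof. by move=> nu_lin g_lin c x y; rewrite g_lin nu_lin scalerDl scalerA. Qed.

Lemma linear_mull (A : algType k) (g : A -> A) a :
  linear g -> linear (fun x => g x * a).
Proof. by move=> g_lin c x y; rewrite g_lin mulrDl scalerAl. Qed.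

Lemma linear_mulr (A : algType k) (g : A -> A) a :
  linear g -> linear (fun x => a * g x).
Proof. by move=> g_lin c x y; rewrite g_lin mulrDr scalerAr. Qed.

Lemma bilin_of_linear U W (b : U -> U -> W) :
  (forall y, linear (b^~ y)) -> (forall x, linear (b x)) -> bilin b.
Proof. by move=> bl br; split=> *; [apply: bl | apply: br]. Qed.

Lemma trilin_of_linear U W (t : U -> U -> U -> W) :
  (forall y z, linear (fun x => t x y z)) -> (forall x z, linear (fun y => t x y z)) ->
  (forall x y, linear (t x y)) -> trilin t.
Proof. by move=> t1 t2 t3; split; [|split] => *; [apply: t1 | apply: t2 | apply: t3]. Qed.

Lemma bilin_linl U W (b : U -> U -> W) y : bilin b -> linear (b^~ y).
Proof. by case=> bl _ c x z; apply: bl. Qed.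

Lemma bilin_linr U W (b : U -> U -> W) x : bilin b -> linear (b x).
Proof. by case=> _ br c y z; apply: br. Qed.

Lemma bilin_compl U W (b : U -> U -> W) (g : U -> U) y :
  bilin b -> linear g -> linear (fun x => b (g x) y).
Proof. by move=> b_bil g_lin c x x'; rewrite g_lin (bilin_linl y b_bil). Qed.

Lemma bilin_compr U W (b : U -> U -> W) (g : U -> U) x :
  bilin b -> linear g -> linear (fun y => b x (g y)).
Proof. by move=> b_bil g_lin c y' y''; rewrite g_lin (bilin_linr x b_bil). Qed.

Lemma trilin_comp1 U W (t : U -> U -> U -> W) (g : U -> U) y z :
  trilin t -> linear g -> linear (fun x => t (g x) y z).
Proof. by case=> t1 _ g_lin c x x'; rewrite g_lin t1. Qed.

Lemma trilin_comp2 U W (t : U -> U -> U -> W) (g : U -> U) x z :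
  trilin t -> linear g -> linear (fun y => t x (g y) z).
Proof. by case=> _ [t2 _] g_lin c y y'; rewrite g_lin t2. Qed.

Lemma trilin_comp3 U W (t : U -> U -> U -> W) (g : U -> U) x y :
  trilin t -> linear g -> linear (fun z => t x y (g z)).
Proof. by case=> _ [_ t3] g_lin c z z'; rewrite g_lin t3. Qed.

End LinearClosure.

Arguments linear_id {k U}.

Ltac linearity :=
  first
  [ exact: linear_id
  | apply: linear_sumf => ?; linearity
  | apply: linear_scale; linearity
  | solve [apply: trilin_comp1; [eassumption | linearity]]
  | solve [apply: trilin_comp2; [eassumption | linearity]]
  | solve [apply: trilin_comp3; [eassumption | linearity]]
  | solve [apply: bilin_compl; [eassumption | linearity]]
  | solve [apply: bilin_compr; [eassumption | linearity]]
  | solve [apply: linear_functional_scale; [eassumption | linearity]]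
  | solve [apply: linear_mull; linearity]
  | solve [apply: linear_mulr; linearity]
  | solve [apply: linear_comp; [eassumption | linearity]]
  | eassumption ].

Section Subspaces.
Variables (k : fieldType) (U : lmodType k).
Implicit Types (C N : U -> Prop) (x y : U).

Definition subspace C := C 0 /\ forall c x y, C x -> C y -> C (c *: x + y).

Lemma subspaceD C x y : subspace C -> C x -> C y -> C (x + y).
Proof. by case=> _ C_lin Cx Cy; rewrite -[x]scale1r; apply: C_lin. Qed.

Lemma subspaceZ C c x : subspace C -> C x -> C (c *: x).
Proof. by case=> C0 C_lin Cx; rewrite -[_ *: _]addr0; apply: C_lin. Qed.

Lemma subspaceB C x y : subspace C -> C x -> C y -> C (x - y).
Proof. by move=> C_sub Cx Cy; rewrite -scaleN1r addrC; case: C_sub => _; apply. Qed.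

Lemma subspace_sum C (I : eqType) (r : seq I) (F : I -> U) :
  subspace C -> (forall i, i \in r -> C (F i)) -> C (\sum_(i <- r) F i).
Proof.
move=> C_sub CF; rewrite big_seq; apply: big_ind => //; first by case: C_sub.
by move=> *; apply: subspaceD.
Qed.

Lemma slice_subspace (T : Type) (s : seq T) (f g : T -> U) :
  subspace (fun x => exists nu, lin_functional nu /\ x = \sum_(p <- s) nu (f p) *: g p).
Proof.
split=> [|c _ _ [nu [nu_lin ->]] [mu [mu_lin ->]]].
  exists (fun _ => 0); split=> [c x y|]; first by rewrite mulr0 addr0.
  by rewrite big1 // => p _; rewrite scale0r.
exists (fun x => c * nu x + mu x); split=> [a x y|]; first by rewrite nu_lin mu_lin; ring.
by rewrite scaler_sumr -big_split; apply: eq_bigr => p _; rewrite scalerA scalerDl.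
Qed.

Lemma exists_complement N : subspace N ->
  exists A : U -> Prop, [/\ subspace A, forall x, A x -> N x -> x = 0 &
                            forall x, exists n a, [/\ N n, A a & x = n + a]].
Proof.
move=> N_sub.
pose independent (A : set U) :=
  (forall c x y, A x -> A y -> A (c *: x + y)) /\ (forall x, A x -> N x -> x = 0).
have [A [[A_lin A_N] A_max]] :
    exists A, independent A /\ forall B, (A `<` B)%classic -> ~ independent B.
  apply: Zorn_bigcup => F F_ind F_tot; split.
    move=> c x y [X FX Xx] [Y FY Yy]; have [XY|YX] := F_tot X Y FX FY.
      by exists Y => //; apply: (F_ind Y FY).1 (XY _ Xx) Yy.
    by exists X => //; apply: (F_ind X FX).1 Xx (YX _ Yy).
  by move=> x [X FX Xx]; apply: (F_ind X FX).2.
have A0 : A 0.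
  have [[x Ax]|A_empty] := pselect (exists x, A x).
    by rewrite -(addNr x) -scaleN1r; apply: A_lin.
  exfalso; apply: (A_max (fun v => v = 0)).
    split=> [x Ax|sub]; first by case: A_empty; exists x.
    by apply: A_empty; exists 0; apply: sub.
  by split=> [c x y -> ->|x ->]; rewrite ?scaler0 ?addr0.
have A_sub : subspace A by [].
exists A; split=> // x; apply: contrapT => x_undec.
pose B v := exists a t, A a /\ v = a + t *: x.
apply: (A_max B).
  split=> [v Av|sub]; first by exists v, 0; rewrite scale0r addr0.
  have Ax : A x by apply: sub; exists 0, 1; rewrite scale1r add0r.
  by apply: x_undec; exists 0, x; rewrite add0r; split=> //; case: N_sub.
split.
  move=> c _ _ [a1 [t1 [A1 ->]]] [a2 [t2 [A2 ->]]].
  exists (c *: a1 + a2), (c * t1 + t2); split; first exact: A_lin.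
  by rewrite scalerDr scalerDl scalerA addrACA.
move=> _ [a [t [Aa ->]]] Nv; have [t0|tn0] := eqVneq t 0.
  by move: Nv; rewrite t0 scale0r addr0 => /(A_N a Aa) ->.
case: x_undec; exists (t^-1 *: (a + t *: x)), (- t^-1 *: a).
split; [exact: subspaceZ | exact: subspaceZ |].
by rewrite scaleNr scalerDr scalerA mulVf // scale1r addrC addKr.
Qed.

Lemma exists_projection N : subspace N ->
  exists pi : U -> U, [/\ linear pi, forall x, N (pi x) & forall x, N x -> pi x = x].
Proof.
move=> N_sub; have [A [A_sub A_N dec]] := exists_complement N_sub.
have dec_uniq x a n a' n' : A a -> N n -> A a' -> N n' ->
    x = n + a -> x = n' + a' -> n = n'.
  move=> Aa Nn Aa' Nn' -> /eqP; rewrite -subr_eq0 opprD addrACA addr_eq0 opprB.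
  move=> /eqP nE; apply/eqP; rewrite -subr_eq0; apply/eqP/A_N; last exact: subspaceB.
  by rewrite nE; apply: subspaceB.
pose pi x := sval (cid (dec x)).
have piP x : exists a, [/\ A a, N (pi x) & x = pi x + a].
  by rewrite /pi; case: cid => n /= [a [? ? ?]]; exists a.
have piE x a n : A a -> N n -> x = n + a -> pi x = n.
  by move=> Aa Nn xE; have [a' [Aa' Npi xE']] := piP x; apply: dec_uniq xE' xE.
exists pi; split=> [c x y||x Nx].
- have [a [Aa Nx xE]] := piP x; have [b [Ab Ny yE]] := piP y.
  apply: (piE _ (c *: a + b)); first by case: A_sub => _; apply.
    by case: N_sub => _; apply.
  by rewrite {1}xE {1}yE scalerDr addrACA.
- by move=> x; have [a []] := piP x.
- by apply: (piE _ 0) => //; [case: A_sub | rewrite addr0].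
Qed.

Lemma exists_coordinate (r : U) : r != 0 ->
  exists lam : U -> k, lin_functional lam /\ lam r = 1.
Proof.
move=> r_neq0; pose L x := exists t : k, x = t *: r.
have L_sub : subspace L.
  split=> [|c _ _ [t ->] [t' ->]]; first by exists 0; rewrite scale0r.
  by exists (c * t + t'); rewrite scalerDl scalerA.
have [pi [pi_lin pi_L pi_id]] := exists_projection L_sub.
pose lam x := sval (cid (pi_L x)).
have lamP x : pi x = lam x *: r by rewrite /lam; case: cid.
have lamE x t : pi x = t *: r -> lam x = t.
  move=> piE; apply/eqP; rewrite -subr_eq0.
  have /eqP : (lam x - t) *: r = 0 by rewrite scalerBl -lamP piE subrr.
  by rewrite scaler_eq0 (negbTE r_neq0) orbF.
exists lam; split=> [c x y|]; first by apply: lamE; rewrite pi_lin !lamP scalerDl scalerA.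
by apply: lamE; rewrite pi_id ?scale1r //; exists 1; rewrite scale1r.
Qed.

Lemma exists_separating_functional C r : subspace C -> ~ C r ->
  exists lam : U -> k, [/\ lin_functional lam, lam r = 1 & forall v, C v -> lam v = 0].
Proof.
move=> C_sub Cr; have [pi [pi_lin pi_C pi_id]] := exists_projection C_sub.
have r'_neq0 : r - pi r != 0.
  by apply: contra_notN Cr; rewrite subr_eq0 => /eqP ->.
have [mu [mu_lin mu1]] := exists_coordinate r'_neq0.
exists (fun v => mu (v - pi v)); split=> [c x y||v Cv] /=.
- by rewrite pi_lin -mu_lin scalerBr opprD addrACA.
- exact: mu1.
- by rewrite pi_id // subrr (@lin0 _ _ k^o mu mu_lin).
Qed.

Lemma finite_coordinates (X : seq U) :
  exists n (lam : nat -> U -> k) (e : nat -> U),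
    (forall i, lin_functional (lam i)) /\
    forall x, x \in X -> x = \sum_(i < n) lam i x *: e i.
Proof.
elim: X => [|x X [n [lam [e [lam_lin X_coord]]]]].
  by exists 0, (fun _ _ => 0), (fun _ => 0); split=> // i c x y; rewrite mulr0 addr0.
pose R v := \sum_(i < n) lam i v *: e i.
have R_lin : linear R by apply: linear_sumf => i; apply: linear_functional_scale.
pose fixR v := v = R v.
have [x_fix|x_nfix] := pselect (fixR x).
  by exists n, lam, e; split=> // v; rewrite inE => /predU1P [->|/X_coord].
have fixR_sub : subspace fixR.
  split=> [|c u v uE vE]; first by rewrite /fixR (lin0 R_lin).
  by rewrite /fixR R_lin -uE -vE.
have [mu [mu_lin mu_x mu_fix]] := exists_separating_functional fixR_sub x_nfix.
exists n.+1, (fun i => if i == n then mu else lam i), (fun i => if i == n then x - R x else e i).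
split=> [i|v]; first by case: eqP.
rewrite big_ord_recr /= eqxx.
under eq_bigr => i _ do rewrite ltn_eqF //.
rewrite -/(R v) inE => /predU1P [->|/X_coord vE].
  by rewrite mu_x scale1r addrC subrK.
by rewrite mu_fix ?scale0r ?addr0 // /fixR -vE.
Qed.

End Subspaces.

Section TensorSlices.
Variables (k : fieldType) (U : lmodType k).

Lemma sum_bilin_eq0 (W : lmodType k) (b : U -> U -> W) (s : seq (U * U)) : bilin b ->
  (forall nu, lin_functional nu -> \sum_(p <- s) nu p.2 *: p.1 = 0) ->
  \sum_(p <- s) b p.1 p.2 = 0.
Proof.
move=> b_bil slice0; have [n [lam [e [lam_lin coord]]]] := finite_coordinates (map snd s).
transitivity (\sum_(p <- s) \sum_(i < n) lam i p.2 *: b p.1 (e i)).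
  rewrite big_seq [RHS]big_seq; apply: eq_bigr => p ps.
  rewrite {1}(coord p.2 (map_f snd ps)) (lin_sum (bilin_linr _ b_bil)).
  by apply: eq_bigr => i _; rewrite (linZ (bilin_linr _ b_bil)).
rewrite exchange_big /=.
transitivity (\sum_(i < n) b (\sum_(p <- s) lam i p.2 *: p.1) (e i)).
  apply: eq_bigr => i _; rewrite (lin_sum (bilin_linl _ b_bil)).
  by apply: eq_bigr => p _; rewrite (linZ (bilin_linl _ b_bil)).
by apply: big1 => i _; rewrite slice0 // (lin0 (bilin_linl _ b_bil)).
Qed.

Lemma teq2_mapl (s : seq (U * U)) (rho : U -> U) : linear rho ->
  (forall nu, lin_functional nu ->
     rho (\sum_(p <- s) nu p.2 *: p.1) = \sum_(p <- s) nu p.2 *: p.1) ->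
  teq2 s [seq (rho p.1, p.2) | p <- s].
Proof.
move=> rho_lin rho_slice W b b_bil; apply/eqP; rewrite eq_sym -subr_eq0 big_map -sumrB.
under eq_bigr do rewrite -(linB (bilin_linl _ b_bil)).
apply/eqP; have := sum_bilin_eq0 (s := [seq (rho p.1 - p.1, p.2) | p <- s]) b_bil.
rewrite big_map; apply.
move=> nu nu_lin; rewrite big_map; under eq_bigr do rewrite scalerBr -(linZ rho_lin).
by rewrite sumrB -(lin_sum rho_lin) rho_slice // subrr.
Qed.

Lemma teq2_mapr (s : seq (U * U)) (rho : U -> U) : linear rho ->
  (forall nu, lin_functional nu ->
     rho (\sum_(p <- s) nu p.1 *: p.2) = \sum_(p <- s) nu p.1 *: p.2) ->
  teq2 s [seq (p.1, rho p.2) | p <- s].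
Proof.
move=> rho_lin rho_slice W b b_bil; apply/eqP; rewrite eq_sym -subr_eq0 big_map -sumrB.
under eq_bigr do rewrite -(linB (bilin_linr _ b_bil)).
have b'_bil : bilin (fun x y => b y x).
  by split=> *; [apply: (bilin_linr _ b_bil) | apply: (bilin_linl _ b_bil)].
apply/eqP; have := sum_bilin_eq0 (s := [seq (rho p.2 - p.2, p.1) | p <- s]) b'_bil.
rewrite big_map; apply.
move=> nu nu_lin; rewrite big_map; under eq_bigr do rewrite scalerBr -(linZ rho_lin).
by rewrite sumrB -(lin_sum rho_lin) rho_slice // subrr.
Qed.

End TensorSlices.

Section HopfSums.
Variables (k : fieldType) (H : algType k) (h : hopf H).
Local Notation D := (hDelta h).
Local Notation S := (hS h).
Local Notation eps := (heps h).

Lemma antipode_linear : linear S.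
Proof. exact: hS_lin. Qed.

Lemma sum_Delta_linear (W : lmodType k) (b : H -> H -> W) : bilin b ->
  linear (fun x => \sum_(p <- D x) b p.1 p.2).
Proof.
move=> b_bil c x y; rewrite (hDelta_lin h c x y b_bil) big_cat big_map /=.
congr (_ + _); rewrite scaler_sumr; apply: eq_bigr => p _.
by rewrite (linZ (bilin_linl _ b_bil)).
Qed.

Lemma sum_Delta_mul (W : lmodType k) (b : H -> H -> W) x y : bilin b ->
  \sum_(p <- D (x * y)) b p.1 p.2 =
  \sum_(p <- D x) \sum_(q <- D y) b (p.1 * q.1) (p.2 * q.2).
Proof. by move=> b_bil; rewrite (hDelta_mul h x y b_bil) big_allpairs_dep. Qed.

Lemma sum_Delta_coassoc (W : lmodType k) (t : H -> H -> H -> W) x : trilin t ->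
  \sum_(p <- D x) \sum_(q <- D p.1) t q.1 q.2 p.2 =
  \sum_(p <- D x) \sum_(q <- D p.2) t p.1 q.1 q.2.
Proof. by move=> t_tri; have := hDelta_coassoc h x t_tri; rewrite !big_allpairs_dep. Qed.

Lemma sum_Delta_counitl (W : lmodType k) (f : H -> W) x : linear f ->
  \sum_(p <- D x) eps p.1 *: f p.2 = f x.
Proof.
move=> f_lin; rewrite -{2}(heps_counitl h x) (lin_sum f_lin).
by apply: eq_bigr => p _; rewrite (linZ f_lin).
Qed.

Lemma sum_Delta_counitr (W : lmodType k) (f : H -> W) x : linear f ->
  \sum_(p <- D x) eps p.2 *: f p.1 = f x.
Proof.
move=> f_lin; rewrite -{2}(heps_counitr h x) (lin_sum f_lin).
by apply: eq_bigr => p _; rewrite (linZ f_lin).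
Qed.

Lemma sum_Delta_antipodel (W : lmodType k) (f : H -> W) x : linear f ->
  \sum_(p <- D x) f (S p.1 * p.2) = eps x *: f 1.
Proof. by move=> f_lin; rewrite -(lin_sum f_lin) hS_antipodel (linZ f_lin). Qed.

Lemma sum_Delta_antipoder (W : lmodType k) (f : H -> W) x : linear f ->
  \sum_(p <- D x) f (p.1 * S p.2) = eps x *: f 1.
Proof. by move=> f_lin; rewrite -(lin_sum f_lin) hS_antipoder (linZ f_lin). Qed.

End HopfSums.

Section Antipode.
Variables (k : fieldType) (H : algType k) (h : hopf H).
Local Notation D := (hDelta h).
Local Notation S := (hS h).
Local Notation eps := (heps h).

Let S_lin := antipode_linear h.

Lemma antipode_mul_expand x y :
  S y * S x = \sum_(p <- D x) \sum_(p' <- D p.1) \sum_(q <- D y) \sum_(q' <- D q.1)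
                S (p'.1 * q'.1) * (p'.2 * q'.2) * (S q.2 * S p.2).
Proof.
transitivity (\sum_(p <- D x) \sum_(q <- D y) eps (p.1 * q.1) *: (S q.2 * S p.2)).
  rewrite -(@sum_Delta_counitl _ _ h _ (fun t => S y * S t)); last by linearity.
  apply: eq_bigr => p _.
  rewrite -(@sum_Delta_counitl _ _ h _ (fun t => S t * S p.2)); last by linearity.
  by rewrite scaler_sumr; apply: eq_bigr => q _; rewrite heps_mul scalerA.
apply: eq_bigr => p _; rewrite exchange_big /=; apply: eq_bigr => q _.
have -> : eps (p.1 * q.1) *: (S q.2 * S p.2) =
    \sum_(r <- D (p.1 * q.1)) S r.1 * r.2 * (S q.2 * S p.2).
  rewrite (@sum_Delta_antipodel _ _ h _ (fun t => t * (S q.2 * S p.2))) ?mul1r //.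
  by linearity.
apply: (@sum_Delta_mul _ _ h _ (fun a b => S a * b * (S q.2 * S p.2))).
by apply: bilin_of_linear => *; linearity.
Qed.

Lemma antipodeM x y : S (x * y) = S y * S x.
Proof.
apply/esym; rewrite antipode_mul_expand.
pose tx a b c := \sum_(q <- D y) \sum_(q' <- D q.1) S (a * q'.1) * (b * q'.2) * (S q.2 * S c).
have tx_tri : trilin tx by apply: trilin_of_linear => *; rewrite /tx; linearity.
rewrite (sum_Delta_coassoc h x tx_tri) /tx.
transitivity (\sum_(p <- D x) \sum_(p' <- D p.2) \sum_(q <- D y)
                eps q.2 *: (S (p.1 * q.1) * p'.1 * 1 * S p'.2)).
  apply: eq_bigr => p _; apply: eq_bigr => p' _.
  pose ty a b c := S (p.1 * a) * (p'.1 * b) * (S c * S p'.2).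
  have ty_tri : trilin ty by apply: trilin_of_linear => *; rewrite /ty; linearity.
  rewrite (sum_Delta_coassoc h y ty_tri) /ty; apply: eq_bigr => q _.
  rewrite -(@sum_Delta_antipoder _ _ h _ (fun t => S (p.1 * q.1) * p'.1 * t * S p'.2)).
    by apply: eq_bigr => q' _; rewrite !mulrA.
  by linearity.
transitivity (\sum_(p <- D x) \sum_(p' <- D p.2) S (p.1 * y) * (p'.1 * S p'.2)).
  apply: eq_bigr => p _; apply: eq_bigr => p' _.
  rewrite -(@sum_Delta_counitr _ _ h _ (fun t => S (p.1 * t) * (p'.1 * S p'.2))).
    by apply: eq_bigr => q _; rewrite mulr1 !mulrA.
  by linearity.
transitivity (\sum_(p <- D x) eps p.2 *: S (p.1 * y)).
  apply: eq_bigr => p _.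
  by rewrite (@sum_Delta_antipoder _ _ h _ (fun t => S (p.1 * y) * t)) ?mulr1 //; linearity.
by rewrite (@sum_Delta_counitr _ _ h _ (fun t => S (t * y))) //; linearity.
Qed.

End Antipode.

Section GroupLike.
Variables (k : fieldType) (H : algType k) (h : hopf H) (P : H).
Local Notation D := (hDelta h).
Local Notation S := (hS h).
Local Notation eps := (heps h).

Let S_lin := antipode_linear h.

Lemma VP_subspace : subspace (inVP h P).
Proof. exact: (slice_subspace (D P) fst snd). Qed.

Lemma PV_subspace : subspace (inPV h P).
Proof. exact: (slice_subspace (D P) snd fst). Qed.

Hypothesis P_grouplike : teq2 [seq (p.1, p.2 * P) | p <- D P] [:: (P, P)].

Lemma sum_Delta_grouplike (W : lmodType k) (t : H -> H -> H -> W) : trilin t ->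
  \sum_(p <- D P) \sum_(q <- D p.2) \sum_(r <- D P) t p.1 (q.1 * r.1) (q.2 * r.2) =
  \sum_(r <- D P) t P r.1 r.2.
Proof.
move=> t_tri.
have b_bil : bilin (fun a b => \sum_(q <- D b) t a q.1 q.2).
  apply: bilin_of_linear => [y|x]; first by linearity.
  by apply: sum_Delta_linear; apply: bilin_of_linear => *; linearity.
have := P_grouplike b_bil; rewrite big_map big_cons big_nil addr0 /= => <-.
apply: eq_bigr => p _; rewrite sum_Delta_mul //.
by apply: bilin_of_linear => *; linearity.
Qed.

(* Expand with coassociativity, use the group-like identity in the form
   P_(1) (x) Delta(P_(2) P) = P (x) Delta(P), and cancel with the antipode. *)
Lemma sum_Delta_shift (W : lmodType k) (t : H -> H -> H -> W) : trilin t ->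
  \sum_(p <- D P) \sum_(q <- D P) t p.1 q.1 (p.2 * q.2) =
  \sum_(p <- D P) \sum_(q <- D P) t p.1 (S p.2 * q.1) q.2.
Proof.
move=> t_tri.
pose t' x y z := \sum_(s <- D x) t s.1 (S s.2 * y) z.
have t'_tri : trilin t'.
  apply: trilin_of_linear => [y z|x z|x y]; rewrite /t'; try by linearity.
  apply: (@sum_Delta_linear _ _ h _ (fun a b => t a (S b * y) z)).
  by apply: bilin_of_linear => *; linearity.
rewrite [RHS]exchange_big /=; have := sum_Delta_grouplike t'_tri; rewrite /t' => <-.
pose t2 a b c := \sum_(q <- D c) \sum_(r <- D P) t a (S b * (q.1 * r.1)) (q.2 * r.2).
have t2_tri : trilin t2.
  apply: trilin_of_linear => [y z|x z|x y]; rewrite /t2; try by linearity.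
  apply: (@sum_Delta_linear _ _ h _ (fun d e => \sum_(r <- D P) t x (S y * (d * r.1)) (e * r.2))).
  by apply: bilin_of_linear => *; linearity.
transitivity (\sum_(p <- D P) \sum_(s <- D p.1) t2 s.1 s.2 p.2); last first.
  apply: eq_bigr => p _; rewrite /t2 exchange_big /=; apply: eq_bigr => q _.
  by rewrite exchange_big.
rewrite sum_Delta_coassoc //; apply: eq_bigr => p _.
pose t3 a b c := \sum_(r <- D P) t p.1 (S a * (b * r.1)) (c * r.2).
have t3_tri : trilin t3 by apply: trilin_of_linear => *; rewrite /t3; linearity.
rewrite /t2 -(sum_Delta_coassoc h p.2 t3_tri) /t3.
transitivity (\sum_(s <- D p.2) eps s.1 *: \sum_(r <- D P) t p.1 (1 * r.1) (s.2 * r.2)).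
  rewrite (@sum_Delta_counitl _ _ h _ (fun c => \sum_(r <- D P) t p.1 (1 * r.1) (c * r.2))).
    by apply: eq_bigr => r _; rewrite mul1r.
  by linearity.
apply: eq_bigr => s _.
rewrite -(@sum_Delta_antipodel _ _ h _ (fun u => \sum_(r <- D P) t p.1 (u * r.1) (s.2 * r.2))).
  by apply: eq_bigr => q _; apply: eq_bigr => r _; rewrite mulrA.
by linearity.
Qed.

Lemma VP_Delta_antipode a : inVP h P a ->
  forall (W : lmodType k) (b : H -> H -> W), bilin b ->
  \sum_(q <- D P) b q.1 (a * q.2) = \sum_(q <- D P) b (S a * q.1) q.2.
Proof.
move=> [nu [nu_lin ->]] W b b_bil.
have t_tri : trilin (fun x y z => nu x *: b y z) by apply: trilin_of_linear => *; linearity.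
transitivity (\sum_(p <- D P) \sum_(q <- D P) nu p.1 *: b q.1 (p.2 * q.2)).
  rewrite exchange_big; apply: eq_bigr => q _ /=.
  by apply: (lin_sumZ (f := fun x => b q.1 (x * q.2))); linearity.
rewrite (sum_Delta_shift t_tri) exchange_big; apply: eq_bigr => q _ /=.
by apply/esym/(lin_sumZ (f := fun x => b (S x * q.1) q.2)); linearity.
Qed.

Lemma VP_mul a b : inVP h P a -> inVP h P b -> inVP h P (a * b).
Proof.
move=> VPa [mu [mu_lin ->]].
exists (fun x => mu (S a * x)); split; first by move=> c x y; rewrite mulrDr -scalerAr mu_lin.
rewrite (lin_sumZ (linear_mulr a linear_id)).
have b_bil : bilin (fun x y => mu x *: y) by apply: bilin_of_linear => *; linearity.
exact: (VP_Delta_antipode VPa b_bil).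
Qed.

End GroupLike.

Definition separability_element (k : fieldType) (H : algType k) (h : hopf H) (P : H)
    (E : seq (H * H)) : Prop :=
  [/\ forall e, e \in E -> inVP h P e.1 /\ inVP h P e.2,
      \sum_(e <- E) e.1 * e.2 = 1 &
      forall x, inVP h P x ->
        teq2 [seq (x * e.1, e.2) | e <- E] [seq (e.1, e.2 * x) | e <- E]].

Section Separability.
Variables (k : fieldType) (H : algType k) (h : hopf H) (P y : H) (iota : H -> H).
Local Notation D := (hDelta h).
Local Notation S := (hS h).

Hypothesis P_grouplike : teq2 [seq (p.1, p.2 * P) | p <- D P] [:: (P, P)].
Hypothesis y_cyclic : forall x, inPV h P x -> exists2 a, inVP h P a & x = S a * y.
Hypothesis iota_lin : linear iota.
Hypothesis iotaK : forall a, inVP h P a -> iota (S a * y) = a.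

Variables (rho rho' : H -> H).
Hypotheses (rho_lin : linear rho) (rho'_lin : linear rho').
Hypotheses (rho_VP : forall x, inVP h P (rho x)) (rho'_PV : forall x, inPV h P (rho' x)).
Hypotheses (rho_id : forall x, inVP h P x -> rho x = x).
Hypotheses (rho'_id : forall x, inPV h P x -> rho' x = x).

(* The representative hDelta h P need not have its legs in _P V and V_P; projecting them
   there does not change the tensor, because all its slices already lie there. *)
Lemma Delta_P_proj (W : lmodType k) (b : H -> H -> W) : bilin b ->
  \sum_(p <- D P) b p.1 p.2 = \sum_(p <- D P) b (rho' p.1) (rho p.2).
Proof.
move=> b_bil.
have left_proj : teq2 (D P) [seq (rho' p.1, p.2) | p <- D P].
  by apply: teq2_mapl => // nu nu_lin; rewrite rho'_id //; exists nu.
pose s := [seq (rho' p.1, p.2) | p <- D P].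
have right_proj : teq2 s [seq (q.1, rho q.2) | q <- s].
  apply: teq2_mapr => // nu nu_lin; rewrite !big_map rho_id //.
  by exists (fun x => nu (rho' x)); split=> // c u v; rewrite rho'_lin nu_lin.
by rewrite (left_proj W b b_bil) (right_proj W b b_bil) !big_map.
Qed.

Lemma iota_PV_VP u : inPV h P u -> inVP h P (iota u).
Proof. by case/y_cyclic => a VPa ->; rewrite iotaK. Qed.

Lemma iota_antipode x u : inVP h P x -> inPV h P u -> iota (S x * u) = iota u * x.
Proof.
move=> VPx /y_cyclic [a VPa ->].
by rewrite mulrA -antipodeM !iotaK //; apply: VP_mul.
Qed.

Lemma Delta_P_iota_balanced x : inVP h P x ->
  forall (W : lmodType k) (b : H -> H -> W), bilin b ->
  \sum_(p <- D P) b (x * rho p.2) (iota (rho' p.1)) =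
  \sum_(p <- D P) b (rho p.2) (iota (rho' p.1) * x).
Proof.
move=> VPx W b b_bil.
have b1_bil : bilin (fun u v => b (x * v) (iota u)) by apply: bilin_of_linear => *; linearity.
have b2_bil : bilin (fun u v => b v (iota u)) by apply: bilin_of_linear => *; linearity.
have b3_bil : bilin (fun u v => b v (iota (S x * u))) by apply: bilin_of_linear => *; linearity.
rewrite -(Delta_P_proj b1_bil) (VP_Delta_antipode P_grouplike VPx b2_bil) (Delta_P_proj b3_bil).
by apply: eq_bigr => p _; rewrite iota_antipode.
Qed.

Local Notation z := (\sum_(p <- D P) p.2 * iota p.1).

Lemma z_proj : z = \sum_(p <- D P) rho p.2 * iota (rho' p.1).
Proof.
by apply: (Delta_P_proj (b := fun u v => v * iota u)); apply: bilin_of_linear => *; linearity.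
Qed.

Lemma z_central x : inVP h P x -> x * z = z * x.
Proof.
move=> VPx; rewrite z_proj mulr_sumr mulr_suml.
have mul_bil : bilin (fun u v : H => u * v) by apply: bilin_of_linear => *; linearity.
under eq_bigr do rewrite mulrA.
by rewrite (Delta_P_iota_balanced VPx mul_bil); under eq_bigr do rewrite mulrA.
Qed.

Lemma separability_element_of_z_inverse w : inVP h P w -> z * w = 1 -> w * z = 1 ->
  separability_element h P [seq (w * rho p.2, iota (rho' p.1)) | p <- D P].
Proof.
move=> VPw zw wz; split.
- by move=> _ /mapP [p _ ->]; split; [apply: VP_mul | apply: iota_PV_VP].
- by rewrite big_map -wz z_proj mulr_sumr; under [RHS]eq_bigr do rewrite mulrA.
have w_central x : inVP h P x -> x * w = w * x.
  move=> VPx; rewrite -[w * x]mulr1 -zw !mulrA -(mulrA w x z) z_central //.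
  by rewrite !mulrA wz mul1r.
move=> x VPx W b b_bil; rewrite !big_map /=.
under eq_bigr do rewrite mulrA w_central //.
have bw_bil : bilin (fun u v => b (w * u) v) by apply: bilin_of_linear => *; linearity.
by under eq_bigr do rewrite -mulrA; rewrite (Delta_P_iota_balanced VPx bw_bil).
Qed.

End Separability.

Section Maschke.
Variables (k : fieldType) (H : algType k) (h : hopf H) (P : H).
Hypothesis P_grouplike : teq2 [seq (p.1, p.2 * P) | p <- hDelta h P] [:: (P, P)].
Variables (M : zmodType) (act : M -> H -> M).
Hypothesis M_mod : right_VP_module h P act.
Local Notation VP := (inVP h P).

Let VP_sub := VP_subspace h P.
Let act1 : forall m, act m 1 = m := let: And4 a _ _ _ := M_mod in a.
Let actDl : forall m n a, VP a -> act (m + n) a = act m a + act n a :=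
  let: And4 _ a _ _ := M_mod in a.
Let actDr : forall m a b, VP a -> VP b -> act m (a + b) = act m a + act m b :=
  let: And4 _ _ a _ := M_mod in a.
Let actM : forall m a b, VP a -> VP b -> act m (a * b) = act (act m a) b :=
  let: And4 _ _ _ a := M_mod in a.

Lemma act0l a : VP a -> act 0 a = 0.
Proof. by move=> VPa; apply: (@addrI _ (act 0 a)); rewrite -actDl ?addr0. Qed.

Lemma act0r m : act m 0 = 0.
Proof.
have VP0 : VP 0 by case: VP_sub.
by apply: (@addrI _ (act m 0)); rewrite -actDr ?addr0.
Qed.

Lemma submodule_complement_of_retraction (N : M -> Prop) (pi : M -> M) :
  {morph pi : m n / m + n} -> (forall m, N (pi m)) -> (forall m, N m -> pi m = m) ->
  (forall m a, VP a -> pi (act m a) = act (pi m) a) ->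
  exists N', [/\ submodule h P act N',
    (forall m, exists n, exists n', [/\ N n, N' n' & m = n + n']) &
    (forall m, N m -> N' m -> m = 0)].
Proof.
move=> piD pi_N pi_id pi_act.
have pi0 : pi 0 = 0 by apply: (@addrI _ (pi 0)); rewrite -piD !addr0.
have piB m n : pi (m - n) = pi m - pi n by apply: (@addIr _ (pi n)); rewrite -piD !subrK.
exists (fun m => pi m = 0); split=> [||m Nm <-]; last by rewrite pi_id.
  split=> [//|m n pm pn|m a pm VPa]; first by rewrite piD pm pn addr0.
  by rewrite pi_act // pm act0l.
move=> m; exists (pi m), (m - pi m); split; first exact: pi_N.
  by rewrite piB (pi_id _ (pi_N m)) subrr.
by rewrite addrC subrK.
Qed.

Variable E : seq (H * H).
Hypothesis E_sep : separability_element h P E.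

Let E_legs : forall e, e \in E -> VP e.1 /\ VP e.2 := let: And3 l _ _ := E_sep in l.

Lemma VP1 : VP 1.
Proof.
case: E_sep => _ <- _; apply: subspace_sum => // e /E_legs [VPe1 VPe2].
exact: VP_mul.
Qed.

Let VPZ1 c : VP (c *: 1) := subspaceZ c VP_sub VP1.

(* M is only a Z-module; the scalars act through c *: 1 in V_P, which makes M a k-vector
   space Mk, in which a submodule has a k-linear projection. *)
Definition scalar_act (c : k) (m : M) : M := act m (c *: 1).

Lemma scalar_actA a b m : scalar_act a (scalar_act b m) = scalar_act (a * b) m.
Proof. by rewrite /scalar_act -actM ?VPZ1 // -scalerAl mul1r scalerA mulrC. Qed.

Lemma scalar_act1 m : scalar_act 1 m = m.
Proof. by rewrite /scalar_act scale1r act1. Qed.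

Lemma scalar_actDr a : {morph scalar_act a : m n / m + n}.
Proof. by move=> m n; apply: actDl. Qed.

Lemma scalar_actDl m : {morph scalar_act^~ m : a b / a + b}.
Proof. by move=> a b; rewrite /scalar_act scalerDl actDr. Qed.

Definition Mk : Type := M.
HB.instance Definition _ := GRing.Zmodule.on Mk.
HB.instance Definition _ :=
  GRing.Zmodule_isLmodule.Build k Mk scalar_actA scalar_act1 scalar_actDr scalar_actDl.

Lemma act_scaler m c a : VP a -> act m (c *: a) = c *: (act m a : Mk).
Proof.
move=> VPa; change (act m (c *: a) = act (act m a) (c *: 1)).
by rewrite -actM // -scalerAr mulr1.
Qed.

Lemma act_linearl a : VP a -> linear (fun m : Mk => act m a : Mk).
Proof.
move=> VPa c m n; rewrite actDl // -actM // -act_scaler //.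
by rewrite -scalerAl mul1r.
Qed.

Lemma act_linearr m c a b : VP a -> VP b ->
  act m (c *: a + b) = c *: (act m a : Mk) + act m b.
Proof. by move=> VPa VPb; rewrite actDr ?act_scaler //; apply: subspaceZ. Qed.

Lemma act_sumr m (r : seq (H * H)) (F : H * H -> H) :
  (forall e, e \in r -> VP (F e)) -> act m (\sum_(e <- r) F e) = \sum_(e <- r) act m (F e).
Proof.
elim: r => [|e r IH] VPF; first by rewrite !big_nil act0r.
have VPr f : f \in r -> VP (F f) by move=> fr; apply: VPF; rewrite inE fr orbT.
rewrite !big_cons actDr ?IH //; first exact/VPF/mem_head.
exact: subspace_sum.
Qed.

Definition average (pi : Mk -> Mk) (m : M) : M := \sum_(e <- E) act (pi (act m e.1)) e.2.

Lemma average_act (pi : Mk -> Mk) m x : linear pi -> VP x ->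
  average pi (act m x) = act (average pi m) x.
Proof.
move=> pi_lin VPx; have [rho [rho_lin rho_VP rho_id]] := exists_projection VP_sub.
pose b u v : Mk := act (pi (act m (rho u))) (rho v).
have b_bil : bilin b.
  (* rho extends the map to all of H, as the tensor identity of E requires *)
  apply: bilin_of_linear => [v c u u'|u c v v']; rewrite /b rho_lin; last exact: act_linearr.
  by rewrite act_linearr // pi_lin act_linearl.
have sep : \sum_(e <- E) b (x * e.1) e.2 = \sum_(e <- E) b e.1 (e.2 * x).
  by case: E_sep => _ _ /(_ x VPx _ b b_bil); rewrite !big_map.
rewrite /average (lin_sum (act_linearl VPx)).
transitivity (\sum_(e <- E) b (x * e.1) e.2).
  apply: eq_big_seq => e /E_legs [VPe1 VPe2].
  by rewrite /b !rho_id ?actM //; apply: VP_mul.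
rewrite sep; apply: eq_big_seq => e /E_legs [VPe1 VPe2].
by rewrite /b !rho_id ?actM //; apply: VP_mul.
Qed.

Lemma completely_reducible_of_separability : completely_reducible h P act.
Proof.
move=> N [N0 ND Nact].
have N_sub : subspace (N : Mk -> Prop) by split=> // c m n Nm Nn; apply/ND/Nn/Nact.
have [pi [pi_lin pi_N pi_id]] := exists_projection N_sub.
apply: (submodule_complement_of_retraction (pi := average pi)).
- move=> m n; rewrite /average -big_split; apply: eq_big_seq => e /E_legs [VPe1 VPe2].
  by rewrite actDl // (linD pi_lin) actDl.
- move=> m; apply: (subspace_sum N_sub) => e /E_legs [_ VPe2].
  exact: Nact.
- move=> m Nm; rewrite /average -[RHS]act1.
  case: E_sep => _ <- _; rewrite act_sumr => [|e /E_legs [VPe1 VPe2]]; last exact: VP_mul.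
  apply: eq_big_seq => e /E_legs [VPe1 VPe2].
  by rewrite pi_id ?actM //; apply: Nact.
- by move=> m x VPx; apply: average_act.
Qed.

End Maschke.

Unset Implicit Arguments.

Theorem mainTheorem20 (k : fieldType) (H : algType k) (h : hopf H) (P : H)
  (y : H) (iota : H -> H) :
  right_group_like_projection h P ->
  VP_Frobenius h P ->
  cyclic_PV h P y ->
  (* iota_y : _P V -> V_P, iota_y(S(a) y) = a, extended k-linearly to H *)
  klinear iota ->
  (forall a, inVP h P a -> iota (hS h a * y) = a) ->
  (* z_y = P_(2) iota_y(P_(1)) is invertible in V_P *)
  (exists2 w, inVP h P w &
     let z := \sum_(p <- hDelta h P) p.2 * iota p.1 in z * w = 1 /\ w * z = 1) ->
  forall (M : zmodType) (act : M -> H -> M),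
    right_VP_module h P act -> completely_reducible h P act.
Proof.
move=> [_ _ P_grouplike _] _ [_ y_cyclic] iota_lin iotaK [w VPw /= [zw wz]] M act M_mod.
have [rho [rho_lin rho_VP rho_id]] := exists_projection (VP_subspace h P).
have [rho' [rho'_lin rho'_PV rho'_id]] := exists_projection (PV_subspace h P).
apply: (completely_reducible_of_separability P_grouplike M_mod).
exact: (separability_element_of_z_inverse P_grouplike y_cyclic iota_lin iotaK
          rho_lin rho'_lin rho_VP rho'_PV rho_id rho'_id VPw zw wz).
Qed.
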